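(* Let $n>3$ and let $G_n$ be the directed graph with nodes $0,\dots,n-1$ and arcs $i\to i+1$ for $0\le i\le n-2$, $j\to 0$ for $1\le j\le n-1$, and $0\to n-1$. Let $\pi\in S_n$ and $\rho=\pi^{-1}$. The following are equivalent: (1) $\rho(0)<\rho(n-1)<\rho(1)$ or $\rho(1)<\rho(n-1)<\rho(0)$; (2) there is no $\mathbf y\in\mathbb{R}^{n-1}$ with $(\Xi R_\pi C_{G_n})^T\mathbf y=\mathbf 0$, $\mathbf y\ge\mathbf 0$ and $\mathbf y\ne\mathbf 0$.
   Context: $d_G(x,y)$ is the shortest directed path length from $x$ to $y$ ($\infty$ if none). The distance-count matrix $C_G\in\mathbb{R}^{n\times n}$ has $(C_G)_{i,k}=|\{j: d_G(j,i)=k\}|$ (indices from 0). $R_\pi$ is the $n\times n$ 0/1 matrix with $(R_\pi)_{ij}=1$ iff $\pi(i)=j$. $\Xi\in\mathbb{R}^{(n-1)\times n}$ has $\Xi_{i,i}=-1$, $\Xi_{i,i+1}=1$ for $0\le i\le n-2$, and all other entries $0$. Vector inequalities are entrywise. *)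

From HB Require Import structures.
From mathcomp Require Import all_boot all_order all_algebra all_fingroup.
From mathcomp Require Import all_classical all_reals.
Set Implicit Arguments. Unset Strict Implicit. Unset Printing Implicit Defensive.
Import Order.TTheory GRing.Theory Num.Theory.
Local Open Scope ring_scope.

Definition Gn_arc (n : nat) : rel 'I_n := fun i j =>
  [|| (val j == (val i).+1)%N,
      (val i != 0%N) && (val j == 0%N)
    | (val i == 0%N) && (val j == n.-1)].

Fixpoint walk (T : finType) (e : rel T) (k : nat) (x y : T) : bool :=
  if k is k'.+1 then [exists z, e x z && walk e k' z y] else x == y.

(* dist_is e x y k : d_G(x,y) = k, i.e. the shortest directed path from x to y
   has length k (a finite value).  If y is unreachable, no k satisfies it
   (d = infinity). *)
Definition dist_is (T : finType) (e : rel T) (x y : T) (k : nat) : bool :=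
  walk e k x y && [forall m : 'I_k, ~~ walk e m x y].

Definition distcount (R : nzRingType) (n : nat) (e : rel 'I_n) : 'M[R]_n :=
  \matrix_(i < n, k < n) (#|[set j : 'I_n | dist_is e j i k]|)%:R.

Definition permmx (R : nzRingType) (n : nat) (s : 'S_n) : 'M[R]_n :=
  \matrix_(i < n, j < n) (s i == j)%:R.

Definition Ximx (R : nzRingType) (n : nat) : 'M[R]_(n.-1, n) :=
  \matrix_(i < n.-1, j < n)
    (if (val j == val i)%N then -1 else if (val j == (val i).+1)%N then 1 else 0).

(* rho(k) = pi^{-1}(k) as a natural number, for k < n (0 otherwise, unused). *)
Definition rhon (n : nat) (s : 'S_n) (k : nat) : nat :=
  if insub k is Some i then val ((s^-1)%g i) else 0%N.

From HB Require Import structures.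
From mathcomp Require Import all_boot all_order all_algebra all_fingroup.
From mathcomp Require Import all_classical all_reals.
From mathcomp Require Import zify ring lra.
Import Order.TTheory GRing.Theory Num.Theory.

(* Write M = Xi R_pi C.  Then M^T y = C^T R_pi^T (Xi^T y), and Xi^T is a
   bijection from R^(n-1) onto the vectors of sum 0, inverted by taking tail
   sums.  Counting distances in G_n shows that the columns k >= 3 of C are
   triangular, so the kernel of C^T is the line spanned by the vector u with
   u_0 = -1, u_1 = -(n-3), u_(n-1) = n-2 and zeros elsewhere.  Hence the
   kernel of M^T is spanned by the tail sums g of the permuted u,
     g_q = (n-2) [q < rho(n-1)] - [q < rho(0)] - (n-3) [q < rho(1)],
   and a nonzero nonnegative solution exists iff g does not take both signs,
   i.e. iff rho(n-1) does not lie between rho(0) and rho(1). *)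

Section Walks.
Variables (T : finType) (e : rel T).

Lemma walk1 x y : e x y -> walk e 1 x y.
Proof. by move=> exy /=; apply/existsP; exists y; rewrite exy eqxx. Qed.

Lemma walk_cat a b x z y : walk e a x z -> walk e b z y -> walk e (a + b) x y.
Proof.
elim: a x => [|a IH] x /=; first by move/eqP->.
by case/existsP=> x' /andP[exx' wx'z] wzy; apply/existsP; exists x'; rewrite exx' (IH x').
Qed.

Lemma dist_is_least d x y :
  walk e d x y -> (forall k, walk e k x y -> d <= k) ->
  forall k, dist_is e x y k = (d == k).
Proof.
move=> wd dmin k; apply/andP/eqP => [[wk /forallP nowalk] | <-].
  apply/eqP; rewrite eqn_leq dmin // leqNgt; apply/negP => ltkd.
  by have := nowalk (Ordinal ltkd); rewrite wd.
split=> //; apply/forallP => i; apply/negP => wi.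
by have := dmin _ wi; rewrite leqNgt ltn_ord.
Qed.

End Walks.

Lemma card_ord_interval N a b : a <= b <= N -> #|[set x : 'I_N | a <= x < b]| = b - a.
Proof.
case/andP=> + le_bN; elim: b le_bN => [|b IH] lt_bN le_ab.
  by rewrite sub0n; apply: eq_card0 => x; rewrite !inE; lia.
case: (leqP a b) => [le_ab' | lt_ba]; last first.
  by rewrite (_ : b.+1 - a = 0); [apply: eq_card0 => x; rewrite !inE|]; lia.
rewrite (_ : [set x | _] = Ordinal lt_bN |: [set x : 'I_N | a <= x < b]).
  by rewrite cardsU1 inE /= ltnn andbF IH ?(ltnW lt_bN) // subSn.
by apply/setP => x; rewrite !inE -val_eqE /=; lia.
Qed.

Section GnDistance.
Variable m : nat.
Local Notation n := m.+4.
Local Notation arc := (@Gn_arc n).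

(* Every node but 0 has an arc to 0; from 0 one continues along the path
   0 -> 1 -> ... or takes the arc 0 -> n-1. *)
Definition Gn_dist (x y : nat) : nat :=
  if x == y then 0 else if y == 0 then 1
  else if y == n.-1 then (if (x == 0) || (x == n.-2) then 1 else 2)
  else if x < y then y - x else y.+1.

Lemma Gn_dist_arc (x z y : 'I_n) : arc x z -> Gn_dist x y <= (Gn_dist z y).+1.
Proof.
have := ltn_ord x; have := ltn_ord z; have := ltn_ord y.
by rewrite /Gn_dist /Gn_arc /= => *; repeat case: ifP => ?; lia.
Qed.

Lemma Gn_dist_le_walk (x y : 'I_n) k : walk arc k x y -> Gn_dist x y <= k.
Proof.
elim: k x => [|k IH] x /=; first by move/eqP->; rewrite /Gn_dist eqxx.
case/existsP=> z /andP[xz wzy].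
by rewrite (leq_trans (@Gn_dist_arc x z y xz)) // ltnS IH.
Qed.

Lemma walk_Gn_path i d : i + d < n -> walk arc d (inord i) (inord (i + d)).
Proof.
elim: d i => [|d IH] i lt_id_n /=; first by rewrite addn0.
apply/existsP; exists (inord i.+1); rewrite /Gn_arc /= !inordK; try lia.
by rewrite eqxx -addSnnS IH //; lia.
Qed.

Lemma walk_Gn_dist (x y : 'I_n) : walk arc (Gn_dist x y) x y.
Proof.
have [ltxn ltyn] := (ltn_ord x, ltn_ord y).
have to0 (v : 'I_n) : val v != 0 -> walk arc 1 v (inord 0).
  by move=> v0; apply: walk1; rewrite /Gn_arc /= inordK // v0 eqxx orbT.
have from0 (v : 'I_n) : val v = n.-1 -> walk arc 1 (inord 0) v.
  by move=> vN; apply: walk1; rewrite /Gn_arc /= inordK // vN !eqxx !orbT.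
rewrite /Gn_dist; case: ifP => [/eqP/val_inj->|nexy]; first exact: eqxx.
case: ifP => [/eqP y0|ny0].
  rewrite (_ : y = inord 0); last by apply: val_inj; rewrite /= inordK.
  by apply: to0; apply/eqP; move: nexy; rewrite /= y0; lia.
case: ifP => [/eqP yN|nyN].
  case: ifP => [x0N|nx0N].
    by apply: walk1; rewrite /Gn_arc /= yN; move: x0N => /=; lia.
  apply: (@walk_cat _ _ 1 1 _ (inord 0)); last exact: from0.
  by apply: to0; apply/eqP; move: nx0N => /=; lia.
case: ifP => ltxy.
  by have := @walk_Gn_path x (y - x); rewrite subnKC ?(ltnW ltxy) // !inord_val; apply.
apply: (@walk_cat _ _ 1 y _ (inord 0)).
  by apply: to0; apply/eqP; move: ltxy nexy => /=; lia.
by have := @walk_Gn_path 0 y; rewrite inord_val; apply.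
Qed.

Lemma dist_is_Gn (x y : 'I_n) k : dist_is arc x y k = (Gn_dist x y == k).
Proof. exact: dist_is_least (walk_Gn_dist x y) (@Gn_dist_le_walk x y) k. Qed.

Definition Gn_count (j k : nat) : nat :=
  if j == 0 then (if k == 0 then 1 else if k == 1 then n.-1 else 0)
  else if j == n.-1 then
    (if k == 0 then 1 else if k == 1 then 2 else if k == 2 then n - 3 else 0)
  else if k <= j then 1 else if k == j.+1 then n.-1 - j else 0.

Lemma card_Gn_dist (j k : 'I_n) : #|[set x : 'I_n | Gn_dist x j == k]| = Gn_count j k.
Proof.
have [ltjn ltkn] := (ltn_ord j, ltn_ord k).
have interval a b c : a <= b <= n -> c = b - a ->
    (forall x, x < n -> (Gn_dist x j == k) = (a <= x < b)) ->
  #|[set x : 'I_n | Gn_dist x j == k]| = c.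
  move=> le_abn -> dist_k; rewrite -(@card_ord_interval n) //.
  by apply: eq_card => x; rewrite !inE dist_k.
rewrite /Gn_count; case: ifP => j0; [|case: ifP => jN]; [
    case: ifP => k0; [|case: ifP => k1]
  | case: ifP => k0; [|case: ifP => k1; [|case: ifP => k2]]
  | case: ifP => le_kj; [|case: ifP => kj1]].
all: [> apply: (interval 0 1) | apply: (interval 1 n) | apply: (interval 0 0)
     | apply: (interval n.-1 n)
     | transitivity #|[set (ord0 : 'I_n); inord n.-2]|;
         [apply: eq_card => x; move: (ltn_ord x); rewrite !inE -!val_eqE /= inordK //
         | by rewrite cards2 -val_eqE /= inordK]
     | apply: (interval 1 n.-2) | apply: (interval 0 0)
     | apply: (interval (j - k) (j - k).+1) | apply: (interval j.+1 n) | apply: (interval 0 0)].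
all: try move=> x ltxn; rewrite /Gn_dist; repeat case: ifP => ?; lia.
Qed.

Lemma Gn_count_succ (i j : nat) : i < n -> 1 < j < n.-1 ->
  Gn_count i j.+1 = if i == j then n.-1 - j else if j < i < n.-1 then 1 else 0.
Proof. by rewrite /Gn_count => *; repeat case: ifP => ?; lia. Qed.

Lemma Gn_count_relation k :
  Gn_count 0 k + m.+1 * Gn_count 1 k = m.+2 * Gn_count n.-1 k.
Proof. by rewrite /Gn_count; repeat case: ifP => ?; lia. Qed.

End GnDistance.

Local Open Scope ring_scope.

Lemma sum_ord_eq_nat {R : pzSemiRingType} N (a : nat) (F : nat -> R) : (a < N)%N ->
  \sum_(j < N) (j == a :> nat)%:R * F j = F a.
Proof.
move=> lt_aN; rewrite (bigD1 (Ordinal lt_aN)) //= eqxx mul1r big1 ?addr0 // => j.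
by rewrite -val_eqE /= => /negbTE->; rewrite mul0r.
Qed.

Section DifferenceMatrix.
Variables (R : comNzRingType) (n : nat).

Definition tailsum_mx : 'M[R]_(n, n.-1) := \matrix_(p, q) (q < p)%N%:R.

Lemma XimxE i j : Ximx R n i j = (j == i.+1 :> nat)%:R - (j == i :> nat)%:R.
Proof.
rewrite mxE; case: (j =P i :> nat) => [->|_]; last by case: eqP; rewrite ?subr0.
by rewrite ltn_eqF // sub0r.
Qed.

Lemma Ximx_mul_tailsum : Ximx R n *m tailsum_mx = 1%:M.
Proof.
apply/matrixP => i q; rewrite !mxE.
have lt_in : (i.+1 < n)%N by have := ltn_ord i; lia.
under eq_bigr do rewrite XimxE mxE mulrBl.
rewrite sumrB !(@sum_ord_eq_nat _ n _ (fun p => (q < p)%N%:R)) // ?(ltnW lt_in) //.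
by rewrite ltnS eq_sym -val_eqE /=; case: ltngtP; rewrite ?subrr ?subr0.
Qed.

Lemma tailsum_mul_Ximx : tailsum_mx *m Ximx R n = 1%:M - \matrix_(p, r) (r == 0 :> nat)%:R.
Proof.
apply/matrixP => p r; rewrite !mxE.
under eq_bigr do rewrite mxE XimxE.
have le_pn : (p <= n.-1)%N by have := ltn_ord p; lia.
rewrite -(big_mkord xpredT (fun q => (q < p)%N%:R * ((r == q.+1 :> nat)%:R - (r == q :> nat)%:R))).
rewrite (big_cat_nat (leq0n p) le_pn) /= [X in _ + X]big_nat_cond [X in _ + X]big1; last first.
  by move=> q /andP[/andP[le_pq _] _]; rewrite ltnNge le_pq mul0r.
rewrite addr0 (eq_big_nat _ _ (F2 := fun q => (r == q.+1 :> nat)%:R - (r == q :> nat)%:R)); last first.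
  by move=> q /andP[_ ->]; rewrite mul1r.
by rewrite telescope_sumr // eq_sym -val_eqE.
Qed.

Lemma tailsum_tr_Ximx_tr (y : 'cV[R]_n.-1) : tailsum_mx^T *m ((Ximx R n)^T *m y) = y.
Proof. by rewrite mulmxA -trmx_mul Ximx_mul_tailsum trmx1 mul1mx. Qed.

Lemma Ximx_tr_tailsum_tr (z : 'cV[R]_n) : \sum_p z p 0 = 0 ->
  (Ximx R n)^T *m (tailsum_mx^T *m z) = z.
Proof.
move=> sum_z0; rewrite mulmxA -trmx_mul tailsum_mul_Ximx linearB /= trmx1 mulmxBl mul1mx.
apply/matrixP => r l; rewrite (ord1 l) !mxE.
under eq_bigr do rewrite !mxE.
by rewrite -mulr_sumr sum_z0 mulr0 subr0.
Qed.

End DifferenceMatrix.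

Lemma permmxE (R : nzRingType) n (s : 'S_n) : permmx R s = perm_mx s.
Proof. by apply/matrixP => i j; rewrite !mxE. Qed.

Lemma perm_mx_mulE (R : nzRingType) n (s : 'S_n) (v : 'cV[R]_n) p :
  (perm_mx s *m v) p 0 = v (s p) 0.
Proof. by rewrite -row_permE mxE. Qed.

Lemma perm_mxKV (R : nzRingType) n (s : 'S_n) (v : 'cV[R]_n) :
  perm_mx s *m (perm_mx (s^-1)%g *m v) = v.
Proof. by rewrite mulmxA -perm_mxM mulgV perm_mx1 mul1mx. Qed.

Lemma perm_mxK (R : nzRingType) n (s : 'S_n) (v : 'cV[R]_n) :
  perm_mx (s^-1)%g *m (perm_mx s *m v) = v.
Proof. by rewrite mulmxA -perm_mxM mulVg perm_mx1 mul1mx. Qed.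

Section GnKernel.
Variables (R : numDomainType) (m : nat).
Local Notation n := m.+4.
Local Notation C := (distcount R (@Gn_arc n)).

Lemma distcount_Gn (j k : 'I_n) : C j k = (Gn_count m j k)%:R.
Proof.
rewrite mxE -card_Gn_dist; congr (_%:R).
by apply: eq_card => x; rewrite !inE dist_is_Gn.
Qed.

Lemma distcount_Gn_tr_mulE (w : 'cV[R]_n) k :
  (C^T *m w) k 0 = \sum_(j < n) (Gn_count m j k)%:R * w j 0.
Proof. by rewrite mxE; apply: eq_bigr => j _; rewrite mxE distcount_Gn. Qed.

Lemma sum_ord_0_1_max (F : 'I_n -> R) :
    (forall j : 'I_n, (1 < j < n.-1)%N -> F j = 0) ->
  \sum_j F j = F ord0 + F (inord 1) + F ord_max.
Proof.
move=> F_mid; rewrite (bigD1 ord0) // (bigD1 (inord 1)) /=; last by rewrite -val_eqE /= inordK.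
rewrite (bigD1 ord_max) /=; last by rewrite -!val_eqE /= inordK.
rewrite big1 ?addr0 ?addrA // => j; rewrite -!val_eqE /= inordK // => ne.
by apply: F_mid; move: (ltn_ord j) ne; lia.
Qed.

Definition Gn_null : 'cV[R]_n :=
  \col_j (if j == 0 :> nat then -1 else if j == 1 :> nat then - (m.+1)%:R
          else if j == n.-1 :> nat then (m.+2)%:R else 0).

Lemma Gn_null_mid (j : 'I_n) : (1 < j < n.-1)%N -> Gn_null j 0 = 0.
Proof. by move=> mid_j; rewrite mxE /= !ifN //; move: mid_j; lia. Qed.

Lemma distcount_Gn_tr_null : C^T *m Gn_null = 0.
Proof.
apply/matrixP => k l; rewrite (ord1 l) distcount_Gn_tr_mulE mxE.
rewrite sum_ord_0_1_max => [|j mid_j]; last by rewrite Gn_null_mid ?mulr0.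
rewrite !mxE !inordK //= -[m.+3]/n.-1 eqxx.
have := congr1 (fun c : nat => c%:R : R) (Gn_count_relation m k).
rewrite /= natrD !natrM => rel.
by rewrite [_ * (m.+2)%:R]mulrC -rel; ring.
Qed.

(* For 1 < j < n-1, column j+1 of C weighs w_j by n-1-j and otherwise only
   the w_i with j < i < n-1, so these w_j vanish by downward induction. *)
Lemma distcount_Gn_tr_kernel_mid (w : 'cV[R]_n) :
  C^T *m w = 0 -> forall j : 'I_n, (1 < j < n.-1)%N -> w j 0 = 0.
Proof.
move=> Cw0; have step (j : 'I_n) : (1 < j < n.-1)%N ->
    (forall i : 'I_n, (j < i < n.-1)%N -> w i 0 = 0) -> w j 0 = 0.
  move=> mid_j w_gt; have := distcount_Gn_tr_mulE w (inord j.+1).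
  rewrite Cw0 mxE inordK; last by have := ltn_ord j; lia.
  rewrite (eq_bigr (fun i : 'I_n => (i == j :> nat)%:R * ((n.-1 - j)%:R * w j 0))) => [|i _].
    rewrite (sum_ord_eq_nat _ _ (fun=> _)) // => /esym/eqP.
    by rewrite mulf_eq0 pnatr_eq0 => /orP[|/eqP //]; move: mid_j; lia.
  rewrite Gn_count_succ //; case: eqP => [/ord_inj->|_]; first by rewrite mul1r.
  case: ifP => [lt_ji|_]; last by rewrite /= mulr0n !mul0r.
  by rewrite (w_gt i) //= mulr0n mulr0 mul0r.
have down d (j : 'I_n) : (n.-1 - d <= j)%N -> (1 < j < n.-1)%N -> w j 0 = 0.
  elim: d j => [|d IH] j le_j mid_j; first by move: le_j mid_j; lia.
  by apply: step => // i lt_ji; apply: IH; move: le_j mid_j lt_ji; lia.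
by move=> j; apply: (down n.-1); rewrite subnn.
Qed.

Lemma distcount_Gn_tr_kernel (w : 'cV[R]_n) :
  C^T *m w = 0 -> w = (- w ord0 0) *: Gn_null.
Proof.
move=> Cw0; have mid := distcount_Gn_tr_kernel_mid _ Cw0.
have col (k : 'I_n) : (Gn_count m 0 k)%:R * w ord0 0 + (Gn_count m 1 k)%:R * w (inord 1) 0
    + (Gn_count m n.-1 k)%:R * w ord_max 0 = 0.
  have := distcount_Gn_tr_mulE w k; rewrite Cw0 mxE => /esym.
  by rewrite sum_ord_0_1_max => [|j /mid->]; rewrite ?mulr0 ?inordK.
have := col ord0; have := col (inord 2); rewrite inordK // /Gn_count /= eqxx.
rewrite !subSS !subn0 !mul1r mul0r add0r => col2 col0.
have [eq_b eq_c] : w (inord 1) 0 = (m.+1)%:R * w ord0 0 /\ w ord_max 0 = - (m.+2)%:R * w ord0 0.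
  move: (w ord0 0) (w (inord 1) 0) (w ord_max 0) col0 col2 => a b c col0 col2.
  have eq_b : b = (m.+1)%:R * a.
    apply/eqP; rewrite -subr_eq0; apply/eqP.
    transitivity ((m.+2)%:R * b + (m.+1)%:R * c - (m.+1)%:R * (a + b + c)); first by ring.
    by rewrite col0 col2 mulr0 subr0.
  by split=> //; transitivity (a + b + c - a - b); [ring | rewrite col0 eq_b; ring].
apply/matrixP => j l; rewrite (ord1 l) !mxE.
case: eqP => [j0|nj0]; first by rewrite (_ : j = ord0) ?mulrN1 ?opprK //; exact: ord_inj.
case: eqP => [j1|nj1].
  by rewrite (_ : j = inord 1) ?eq_b; [ring | apply: ord_inj; rewrite inordK].
case: eqP => [jN|nj]; first by rewrite (_ : j = ord_max) ?eq_c; [ring | exact: ord_inj].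
by rewrite mid ?mulr0 //; move: nj0 nj1 nj (ltn_ord j); lia.
Qed.

End GnKernel.

Section GnPermuted.
Variables (R : numDomainType) (m : nat) (pi : 'S_m.+4).
Local Notation n := m.+4.
Local Notation M := (Ximx R n *m permmx R pi *m distcount R (@Gn_arc n)).
Local Notation rho j := (val ((pi^-1)%g j)).

Definition Gn_ray : 'cV[R]_n.-1 := (tailsum_mx R n)^T *m (perm_mx pi *m Gn_null R m).

Lemma sum_perm_Gn_null : \sum_p (perm_mx pi *m Gn_null R m) p 0 = 0.
Proof.
rewrite (reindex_inj (@perm_inj _ (pi^-1)%g)) /=.
under eq_bigr do rewrite perm_mx_mulE permKV.
rewrite sum_ord_0_1_max => [|j /Gn_null_mid //].
by rewrite !mxE inordK //= -[m.+3]/n.-1 eqxx; ring.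
Qed.

Lemma Gn_kernel (y : 'cV[R]_n.-1) : M^T *m y = 0 <-> exists t, y = t *: Gn_ray.
Proof.
have MTE (v : 'cV[R]_n.-1) :
    M^T *m v = (distcount R (@Gn_arc n))^T *m (perm_mx (pi^-1)%g *m ((Ximx R n)^T *m v)).
  by rewrite !trmx_mul permmxE tr_perm_mx !mulmxA.
split=> [My0 | [t ->]].
  rewrite MTE in My0; have w_null := distcount_Gn_tr_kernel _ _ _ My0.
  exists (- (perm_mx (pi^-1)%g *m ((Ximx R n)^T *m y)) ord0 0).
  by rewrite /Gn_ray !scalemxAr -w_null perm_mxKV tailsum_tr_Ximx_tr.
rewrite -scalemxAr MTE /Gn_ray Ximx_tr_tailsum_tr ?sum_perm_Gn_null // perm_mxK.
by rewrite distcount_Gn_tr_null scaler0.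
Qed.

Lemma Gn_rayE q : Gn_ray q 0 = (m.+2)%:R * (q < rho ord_max)%N%:R
  - (q < rho ord0)%N%:R - (m.+1)%:R * (q < rho (inord 1))%N%:R.
Proof.
rewrite mxE (reindex_inj (@perm_inj _ (pi^-1)%g)) /=.
rewrite sum_ord_0_1_max => [|j mid_j]; last by rewrite perm_mx_mulE permKV Gn_null_mid ?mulr0.
by rewrite !perm_mx_mulE !permKV !mxE inordK //= -[m.+3]/n.-1 eqxx; ring.
Qed.

Lemma Gn_ray_neq0 : Gn_ray != 0.
Proof.
apply/eqP => g0; have := Ximx_tr_tailsum_tr _ _ _ sum_perm_Gn_null.
rewrite -/Gn_ray g0 mulmx0 => /(congr1 (fun v => (perm_mx (pi^-1)%g *m v) ord0 0)).
by rewrite perm_mxK mulmx0 !mxE /= => /eqP; rewrite eq_sym oppr_eq0 oner_eq0.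
Qed.

End GnPermuted.

Lemma no_nonneg_multiple_iff {R : realDomainType} {N} (v : 'cV[R]_N) : v != 0 ->
  ~ (exists t, (forall i, 0 <= (t *: v) i 0) /\ t *: v != 0) <->
  (exists i, v i 0 < 0) /\ (exists i, 0 < v i 0).
Proof.
move=> v_nz; split=> [no_mult | [[i vi_lt0] [j vj_gt0]] [t [tv_ge0 tv_nz]]].
  have [/existsP[j vj_gt0]|no_pos] := boolP [exists j, 0 < v j 0].
    split; last by exists j.
    apply: contra_notP no_mult => no_neg; exists 1; rewrite scale1r; split=> // i.
    by rewrite leNgt; apply/negP => vi_lt0; apply: no_neg; exists i.
  exfalso; apply: no_mult; exists (-1); rewrite scalemx_eq0 oppr_eq0 oner_eq0 /=; split=> // i.
  rewrite mxE mulN1r oppr_ge0 leNgt; apply: contraNN no_pos => vi_gt0.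
  by apply/existsP; exists i.
move: tv_nz (tv_ge0 i) (tv_ge0 j); rewrite !mxE scalemx_eq0 negb_or => /andP[t_nz _].
by case: (ltgtP t 0) t_nz => // t_sgn _; nra.
Qed.

Lemma Gn_step_mixed_signs (R : realDomainType) m (a b c : nat) (f : 'I_m.+3 -> R) :
    a != c -> b != c -> (a < m.+4)%N -> (b < m.+4)%N ->
    (forall q : 'I_m.+3,
      f q = (m.+2)%:R * (q < c)%N%:R - (q < a)%N%:R - (m.+1)%:R * (q < b)%N%:R) ->
  (a < c < b)%N \/ (b < c < a)%N <-> (exists q, f q < 0) /\ (exists q, 0 < f q).
Proof.
move=> ne_ac ne_bc lt_an lt_bn fE.
have m_ge0 : 0 <= m%:R :> R by [].
have f_at (q : 'I_m.+3) (x y z : bool) : (q < c)%N = x -> (q < a)%N = y -> (q < b)%N = z ->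
    f q = (m.+2)%:R * x%:R - y%:R - (m.+1)%:R * z%:R.
  by move=> <- <- <-; apply: fE.
split=> [[/andP[lt_ac lt_cb] | /andP[lt_bc lt_ca]] | [[q f_lt0] [q' f_gt0]]].
- have [lt_a lt_c] : (a < m.+3)%N /\ (c < m.+3)%N by lia.
  split; [exists (Ordinal lt_c) | exists (Ordinal lt_a)].
    by rewrite (f_at _ false false true) /=; try lia; lra.
  by rewrite (f_at _ true false true) /=; try lia; lra.
- have [lt_b lt_c] : (b < m.+3)%N /\ (c < m.+3)%N by lia.
  split; [exists (Ordinal lt_c) | exists (Ordinal lt_b)].
    by rewrite (f_at _ false true false) /=; try lia; lra.
  by rewrite (f_at _ true true false) /=; try lia; lra.
have [lt_ac|lt_ca] : (a < c)%N \/ (c < a)%N by lia.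
all: have [lt_bc|lt_cb] : (b < c)%N \/ (c < b)%N by lia.
- by exfalso; move: f_lt0; rewrite fE; do 3!case: ltnP => ?; try lia; move=> /=; lra.
- by left; rewrite lt_ac lt_cb.
- by right; rewrite lt_ca lt_bc.
- by exfalso; move: f_gt0; rewrite fE; do 3!case: ltnP => ?; try lia; move=> /=; lra.
Qed.

Lemma Gn_ray_mixed_signs (R : realDomainType) m (pi : 'S_m.+4) :
  let rho j := val ((pi^-1)%g j) in
  (rho ord0 < rho ord_max < rho (inord 1))%N \/ (rho (inord 1) < rho ord_max < rho ord0)%N <->
  (exists q, Gn_ray R m pi q 0 < 0) /\ (exists q, 0 < Gn_ray R m pi q 0).
Proof.
move=> rho; have rho_neq (i j : 'I_m.+4) : i != j -> rho i != rho j.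
  by move=> neq_ij; rewrite (inj_eq val_inj) (inj_eq perm_inj).
apply: Gn_step_mixed_signs (ltn_ord _) (ltn_ord _) (@Gn_rayE R m pi).
  exact: rho_neq.
by apply: rho_neq; rewrite -val_eqE /= inordK.
Qed.

Lemma rhonE {n} (s : 'S_n) (i : 'I_n) : rhon s i = val ((s^-1)%g i).
Proof. by rewrite /rhon valK. Qed.

Theorem theorem7 (R : realType) (n : nat) (hn : (3 < n)%N) (pi : 'S_n) :
  ((rhon pi 0 < rhon pi n.-1 < rhon pi 1)%N \/
   (rhon pi 1 < rhon pi n.-1 < rhon pi 0)%N)
  <->
  ~ (exists y : 'cV[R]_(n.-1),
       ((Ximx R n *m permmx R pi *m distcount R (@Gn_arc n))^T *m y = 0) /\
       (forall i, 0 <= y i 0) /\ y != 0).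
Proof.
case: n hn pi => [|[|[|[|m]]]] // _ pi.
have rhon1 : rhon pi 1 = val ((pi^-1)%g (inord 1)) by rewrite -rhonE inordK.
rewrite (rhonE pi ord0) (rhonE pi ord_max) rhon1.
apply: iff_trans (Gn_ray_mixed_signs R m pi) _.
apply: iff_trans (iff_sym (no_nonneg_multiple_iff _ (Gn_ray_neq0 R m pi))) _.
split=> [no_ray [y [/Gn_kernel[t ->] [ty_ge0 ty_nz]]] | no_sol [t [tg_ge0 tg_nz]]].
  by apply: no_ray; exists t.
by apply: no_sol; exists (t *: Gn_ray R m pi); split=> //; apply/Gn_kernel; exists t.
Qed.
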